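(* Let $p\in[1,+\infty]$ and let $X^1,\dots,X^N$ be mm-spaces. Then for every $\kappa_1\in(0,1)$ and $\kappa_2,\dots,\kappa_N\in(0,1/2)$, $$\mathrm{OD}\Big(\big(\textstyle\prod_{i=1}^N X^i\big)_p;-\sum_{i=1}^N\kappa_i\Big)\le\mathrm{OD}(X^1;-\kappa_1)+2\sum_{i=2}^N\mathrm{OD}(X^i;-\kappa_i).$$
   Context: An mm-space is a triple $(X,d_X,m_X)$ with $(X,d_X)$ complete separable metric space and $m_X$ a Borel probability measure. $(\prod_{i=1}^NX^i)_p$ is the mm-space $(\prod X^i, d, \bigotimes m_{X^i})$ with $d((x_i),(x'_i))=(\sum_i d_{X^i}(x_i,x'_i)^p)^{1/p}$ if $p<\infty$ and $\max_i d_{X^i}(x_i,x'_i)$ if $p=\infty$. Partial diameter: $\mathrm{PD}(X;\alpha)$ = infimum of $\operatorname{diam}A$ over Borel $A$ with $m_X(A)\ge\alpha$. Observable diameter: $\mathrm{OD}(X;-\kappa):=\sup_f\mathrm{PD}((\mathbb R,|\cdot|,f_*m_X);1-\kappa)$ over 1-Lipschitz $f\colon X\to\mathbb R$. *)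

From HB Require Import structures.
From mathcomp Require Import all_boot all_order all_algebra.
From mathcomp Require Import all_classical all_reals all_analysis.
Set Implicit Arguments. Unset Strict Implicit. Unset Printing Implicit Defensive.
Import Order.TTheory GRing.Theory Num.Theory.
Import numFieldNormedType.Exports.
Local Open Scope classical_set_scope.
Local Open Scope ring_scope.

Section MM.
Variable R : realType.

Definition is_metric (T : Type) (d : T -> T -> R) : Prop :=
  [/\ forall x y, 0 <= d x y,
      forall x y, d x y = 0 <-> x = y,
      forall x y, d x y = d y x &
      forall x y z, d x z <= d x y + d y z].

Definition d_complete (T : Type) (d : T -> T -> R) : Prop :=
  forall u : nat -> T,
    (forall e, 0 < e -> exists N, forall m n, (N <= m)%N -> (N <= n)%N -> d (u m) (u n) < e) ->
    exists l, forall e, 0 < e -> exists N, forall n, (N <= n)%N -> d (u n) l < e.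

(** separable: existence of a countable dense subset (an mm-space is nonempty,
    so a countable dense set can be enumerated by a sequence). *)
Definition d_separable (T : Type) (d : T -> T -> R) : Prop :=
  exists D : nat -> T, forall x e, 0 < e -> exists k, d x (D k) < e.

Definition d_open (T : Type) (d : T -> T -> R) : set (set T) :=
  [set U | forall x, U x -> exists2 r, 0 < r & [set y | d x y < r] `<=` U].

Definition d_borel (T : Type) (d : T -> T -> R) : set (set T) :=
  <<s d_open d >>.

(** m is a Borel probability measure (its values outside Borel sets are irrelevant) *)
Definition is_borel_probability (T : Type) (d : T -> T -> R) (m : set T -> \bar R) : Prop :=
  [/\ m set0 = 0%E, m setT = 1%E,
      forall A, d_borel d A -> (0 <= m A)%E &
      forall F : nat -> set T, (forall k, d_borel d (F k)) -> trivIset setT F ->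
        (fun n => \sum_(k < n) m (F k))%E @ \oo --> m (\bigcup_k F k)].

Record mmspace := MMSpace {
  mm_T : Type;
  mm_d : mm_T -> mm_T -> R;
  mm_m : set mm_T -> \bar R;
  mm_metric : is_metric mm_d;
  mm_complete : d_complete mm_d;
  mm_separable : d_separable mm_d;
  mm_prob : is_borel_probability mm_d mm_m }.

(** diameter, with the convention diam set0 = 0 *)
Definition diam (T : Type) (d : T -> T -> R) (A : set T) : \bar R :=
  ereal_sup ([set (d x y)%:E | x in A & y in A] `|` [set 0%E]).

Definition PD (T : Type) (d : T -> T -> R) (m : set T -> \bar R) (alpha : R) : \bar R :=
  ereal_inf [set diam d A | A in [set A | d_borel d A /\ (alpha%:E <= m A)%E]].

Definition dist_R (a b : R) : R := `|a - b|.

Definition lip1 (T : Type) (d : T -> T -> R) (f : T -> R) : Prop :=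
  forall x y, `|f x - f y| <= d x y.

Definition OD (T : Type) (d : T -> T -> R) (m : set T -> \bar R) (kappa : R) : \bar R :=
  ereal_sup [set PD dist_R (fun B => m (f @^-1` B)) (1 - kappa) | f in [set f | lip1 d f]].

Definition mmOD (X : mmspace) (kappa : R) : \bar R := OD (@mm_d X) (@mm_m X) kappa.

Definition dprod (n : nat) (T : 'I_n -> Type) (d : forall i, T i -> T i -> R)
    (p : \bar R) (x y : forall i, T i) : R :=
  match p with
  | r%:E => (\sum_(i < n) (d i (x i) (y i)) `^ r) `^ r^-1
  | _ => \big[Order.max/0]_(i < n) d i (x i) (y i)
  end.

(** mu is the product measure of the m_i on the product Borel sets:
    a Borel probability measure for the product metric that is multiplicative
    on measurable rectangles (this determines it uniquely) *)
Definition is_product_measure (n : nat) (X : 'I_n -> mmspace) (p : \bar R)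
    (mu : set (forall i, mm_T (X i)) -> \bar R) : Prop :=
  is_borel_probability (dprod (fun i => @mm_d (X i)) p) mu /\
  forall A : forall i, set (mm_T (X i)), (forall i, d_borel (@mm_d (X i)) (A i)) ->
    mu [set x | forall i, A i (x i)] = (\prod_(i < n) @mm_m (X i) (A i))%E.

End MM.

(* Take f 1-Lipschitz on the product.  Replacing f successively by its median
   in the coordinates 2, ..., N (the other coordinates frozen) keeps it
   1-Lipschitz in each coordinate, and the i-th step moves it by more than
   OD(X^i; -kappa_i) + e only on a set of measure at most kappa_i.  The final
   function depends on the first coordinate alone, so it lies, up to mass
   kappa_1, in a set of diameter OD(X^1; -kappa_1) + e; hence f lies, up to mass
   sum_i kappa_i, in a set of diameter
   OD(X^1; -kappa_1) + 2 sum_(i >= 2) (OD(X^i; -kappa_i) + e) + 3 e.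
   The product measure is only known on rectangles, so instead of Fubini the
   i-th step is estimated by covering its exceptional set with countably many
   rectangles built from a countable Borel partition of each factor into small
   cells; inside a rectangle the function is compared with its value at the
   centers of the cells. *)

From HB Require Import structures.
From mathcomp Require Import all_boot all_order all_algebra.
From mathcomp Require Import all_classical all_reals all_analysis.
From mathcomp Require Import lra ring.
Import Order.TTheory GRing.Theory Num.Theory.
Local Open Scope classical_set_scope.
Local Open Scope ring_scope.
Set Implicit Arguments. Unset Strict Implicit. Unset Printing Implicit Defensive.

Section BorelSets.
Variables (R : realType) (T : Type) (d : T -> T -> R).

Lemma d_borel_open A : d_open d A -> d_borel d A.
Proof. exact: sub_sigma_algebra. Qed.

Lemma d_borel0 : d_borel d set0.
Proof. exact: sigma_algebra0. Qed.

Lemma d_borelC A : d_borel d A -> d_borel d (~` A).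
Proof. by move=> hA; rewrite -setTD; exact: sigma_algebraCD. Qed.

Lemma d_borelT : d_borel d setT.
Proof. by rewrite -setC0; apply: d_borelC; exact: d_borel0. Qed.

Lemma d_borel_bigcup (F : nat -> set T) :
  (forall k, d_borel d (F k)) -> d_borel d (\bigcup_k F k).
Proof. exact: sigma_algebra_bigcup. Qed.

Lemma d_borelU A B : d_borel d A -> d_borel d B -> d_borel d (A `|` B).
Proof.
move=> hA hB; rewrite -bigcup2E; apply: d_borel_bigcup => -[|[|k]] //=.
exact: d_borel0.
Qed.

Lemma d_borelI A B : d_borel d A -> d_borel d B -> d_borel d (A `&` B).
Proof.
by move=> hA hB; rewrite -[A `&` B]setCK setCI; apply: d_borelC; apply: d_borelU; exact: d_borelC.
Qed.

Lemma d_borelD A B : d_borel d A -> d_borel d B -> d_borel d (A `\` B).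
Proof. by move=> hA hB; apply: d_borelI => //; exact: d_borelC. Qed.

Lemma d_borel_cst (P : Prop) : d_borel d [set _ | P].
Proof.
case: (pselect P) => hP.
  by rewrite (_ : [set _ | P] = setT); [exact: d_borelT | apply/seteqP; split].
by rewrite (_ : [set _ | P] = set0); [exact: d_borel0 | apply/seteqP; split].
Qed.

Lemma d_borel_bigsetU N (F : nat -> set T) :
  (forall i, (i < N)%N -> d_borel d (F i)) -> d_borel d (\big[setU/set0]_(i < N) F i).
Proof.
elim: N => [_|N ih hF]; first by rewrite big_ord0; exact: d_borel0.
by rewrite big_ord_recr; apply: d_borelU; [apply: ih => i /ltnW/hF | exact: hF].
Qed.

Lemma d_borel_bigcap_seq (I : eqType) (s : seq I) (A : I -> set T) :
  (forall i, d_borel d (A i)) -> d_borel d [set x | forall i, i \in s -> A i x].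
Proof.
move=> hA; elim: s => [|a s ih].
  by rewrite (_ : [set x | _] = setT); [exact: d_borelT | apply/seteqP].
rewrite (_ : [set x | _] = A a `&` [set x | forall i, i \in s -> A i x]).
  exact: d_borelI.
apply/seteqP; split => x /= => [h|[Aa h] i].
  by split=> [|i si]; apply: h; rewrite inE ?eqxx ?si ?orbT.
by rewrite inE => /orP[/eqP->|/h].
Qed.

Lemma d_borel_preimage (U : Type) (e : U -> U -> R) (h : T -> U) (C : R) :
  0 < C -> (forall x y, e (h x) (h y) <= C * d x y) ->
  forall B, d_borel e B -> d_borel d (h @^-1` B).
Proof.
move=> C0 hC; suff : d_borel e `<=` [set B | d_borel d (h @^-1` B)] by apply.
apply: smallest_sub => [|V oV].
  split=> [|A|F]; rewrite /= ?preimage_set0 ?setTD ?preimage_bigcup.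
  - exact: d_borel0.
  - by rewrite -preimage_setC; exact: d_borelC.
  - exact: d_borel_bigcup.
apply: d_borel_open => x /= /oV[r r0 sub]; exists (r / C); first by rewrite divr_gt0.
move=> y /= dxy; apply: sub; rewrite /= (le_lt_trans (hC x y)) //.
by rewrite -ltr_pdivlMl // mulrC.
Qed.

End BorelSets.

Section BorelProbability.
Variables (R : realType) (T : Type) (d : T -> T -> R) (m : set T -> \bar R).
Hypothesis Hm : is_borel_probability d m.

Lemma bprob0 : m set0 = 0%E.
Proof. by case: Hm. Qed.

Lemma bprobT : m setT = 1%E.
Proof. by case: Hm. Qed.

Lemma bprob_ge0 A : d_borel d A -> (0 <= m A)%E.
Proof. by case: Hm => _ _ + _; apply. Qed.

(* MathComp-Analysis measures live on pointed types; a probability space is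
   nonempty, which provides the point. *)
Let inhabited_T : exists t : T, True.
Proof.
case: (pselect (exists t : T, True)) => // hT.
have eT : setT = set0 :> set T by apply/seteqP; split => // t _; apply: hT; exists t.
by move: bprobT; rewrite eT bprob0 => -[] /eqP; rewrite eq_sym oner_eq0.
Qed.

Let PT : pointedType := HB.pack T (gen_eqMixin T) (gen_choiceMixin T)
  (isPointed.Build T (projT1 (cid inhabited_T))).
Let BT := @g_sigma_algebraType PT (d_open d).

Let mB (A : set BT) : \bar R := if pselect (d_borel d A) then m A else 0%E.

Let mBE A : d_borel d A -> mB A = m A.
Proof. by rewrite /mB; case: pselect. Qed.

Let mB0 : mB set0 = 0%E.
Proof. by rewrite mBE ?bprob0 //; exact: d_borel0. Qed.

Let mB_ge0 A : (0 <= mB A)%E.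
Proof. by rewrite /mB; case: pselect => // hA; exact: bprob_ge0. Qed.

Let mB_sigma_additive : semi_sigma_additive mB.
Proof.
move=> F mF tF mU; rewrite mBE //.
have -> : (fun n => \sum_(0 <= i < n) mB (F i))%E = (fun n => \sum_(k < n) m (F k))%E.
  by apply: funext => k; rewrite big_mkord; apply: eq_bigr => i _; exact: mBE (mF i).
by case: Hm => _ _ _; apply.
Qed.

Let mu : {measure set BT -> \bar R} :=
  HB.pack mB (isMeasure.Build _ BT R mB mB0 mB_ge0 mB_sigma_additive).

Lemma bprob_le A B : d_borel d A -> d_borel d B -> A `<=` B -> (m A <= m B)%E.
Proof. by move=> hA hB AB; rewrite -!mBE //; apply: (le_measure mu); rewrite ?inE. Qed.

Lemma bprob_le1 A : d_borel d A -> (m A <= 1)%E.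
Proof. by move=> hA; rewrite -bprobT; apply: bprob_le => //; exact: d_borelT. Qed.

Lemma bprob_setU_le A B : d_borel d A -> d_borel d B -> (m (A `|` B) <= m A + m B)%E.
Proof. by move=> hA hB; rewrite -!mBE //; [exact: (measureU2 mu) | exact: d_borelU]. Qed.

Lemma bprob_setU A B : d_borel d A -> d_borel d B -> A `&` B = set0 ->
  m (A `|` B) = (m A + m B)%E.
Proof. by move=> hA hB AB; rewrite -!mBE //; [exact: (measureU mu) | exact: d_borelU]. Qed.

Lemma bprob_disjoint_le A B (k : R) : d_borel d A -> d_borel d B -> A `&` B = set0 ->
  ((1 - k)%:E <= m A)%E -> (m B <= k%:E)%E.
Proof.
move=> hA hB AB.
have := bprob_le1 (d_borelU hA hB); rewrite bprob_setU //.
have := bprob_ge0 hA; have := bprob_le1 hA; have := bprob_ge0 hB; have := bprob_le1 hB.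
case: (m A) => [a| |] //; case: (m B) => [b| |] //.
by rewrite -EFinD !lee_fin; lra.
Qed.

Lemma bprob_bigsetU_le N (F : nat -> set T) : (forall i, (i < N)%N -> d_borel d (F i)) ->
  (m (\big[setU/set0]_(i < N) F i) <= \sum_(i < N) m (F i))%E.
Proof.
move=> hF; rewrite -mBE; last exact: d_borel_bigsetU.
rewrite (eq_bigr (fun i : 'I_N => mB (F i))); last by move=> i _; rewrite mBE //; exact: hF.
exact: (Boole_inequality mu hF).
Qed.

Lemma bprob_le_cover (I : countType) (F G : I -> set T) (k : R) E :
  0 <= k -> d_borel d E -> (forall i, d_borel d (F i)) -> (forall i, d_borel d (G i)) ->
  (forall i j x, G i x -> G j x -> i = j) -> E `<=` \bigcup_i F i ->
  (forall i, (m (F i) <= k%:E * m (G i))%E) -> (m E <= k%:E)%E.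
Proof.
move=> k0 hE hF hG tG EF FG.
pose seq_of (H : I -> set T) n := if pickle_inv n is Some i then H i else set0.
have hseq H : (forall i, d_borel d (H i)) -> forall n, d_borel d (seq_of H n).
  by move=> hH n; rewrite /seq_of; case: pickle_inv => [i|]; [exact: hH | exact: d_borel0].
have mseq n : (mB (seq_of F n) <= k%:E * mB (seq_of G n))%E.
  rewrite (mBE (hseq _ hF n)) (mBE (hseq _ hG n)) /seq_of; case: pickle_inv => [i|] //.
  by rewrite bprob0 mule0.
have tseq : trivIset setT (seq_of G).
  move=> a b _ _ [x []]; rewrite /seq_of.
  case Ea: (pickle_inv a) => [i|] //; case Eb: (pickle_inv b) => [j|] // Gi Gj.
  have ij := tG _ _ _ Gi Gj; rewrite ij in Ea.
  by rewrite -(@pickle_invK I a) -(@pickle_invK I b) Ea Eb.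
have hEseq : E `<=` \bigcup_n seq_of F n.
  by move=> x /EF[i _ Fix]; exists (pickle i) => //; rewrite /seq_of pickleK_inv.
have sub : (mB E <= \sum_(n <oo) mB (seq_of F n))%E.
  by apply: (measure_sigma_subadditive mu); [exact: hseq | exact: hE | exact: hEseq].
rewrite -(mBE hE); apply: le_trans sub _.
apply: le_trans (lee_nneseries (fun n _ _ => mB_ge0 _) (fun n _ => mseq n)) _.
have hU : d_borel d (\bigcup_n seq_of G n) by apply: d_borel_bigcup; exact: hseq.
rewrite nneseriesZl // -(measure_semi_bigcup mu) // ?mBE //; last exact: hseq.
rewrite -[leRHS]mule1 lee_wpmul2l ?lee_fin //.
by change (mB (\bigcup_n seq_of G n) <= 1)%E; rewrite mBE // bprob_le1.
Qed.

End BorelProbability.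

Section RealBorel.
Variable R : realType.

Lemma dist_R_borel_lt (v : R) : d_borel (@dist_R R) [set s | s < v].
Proof.
apply: d_borel_open => s /= hs; exists (v - s); first by rewrite subr_gt0.
by move=> y /=; rewrite /dist_R distrC => hy; have := ler_norm (y - s); lra.
Qed.

Lemma dist_R_borel_far (c a : R) : d_borel (@dist_R R) [set s | c < `|s - a|].
Proof.
apply: d_borel_open => s /= hs; exists (`|s - a| - c); first by rewrite subr_gt0.
by move=> y /=; rewrite /dist_R => hy; have := ler_distD y s a; lra.
Qed.

Lemma dist_R_borel_nbhs (B : set R) (r : R) :
  d_borel (@dist_R R) [set s | exists2 u, B u & `|s - u| < r].
Proof.
apply: d_borel_open => s /= [u Bu hs]; exists (r - `|s - u|); first by rewrite subr_gt0.
move=> y /=; rewrite /dist_R => hy; exists u => //.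
by have := ler_distD s y u; rewrite (distrC y s); lra.
Qed.

End RealBorel.

Section MMSpace.
Variables (R : realType) (Y : mmspace R).
Local Notation T := (mm_T Y).
Local Notation d := (@mm_d R Y).
Local Notation m := (@mm_m R Y).

Lemma mm_d_ge0 x y : 0 <= d x y. Proof. by case: (mm_metric Y). Qed.
Lemma mm_d_xx x : d x x = 0. Proof. by case: (mm_metric Y) => _ h _ _; exact/h. Qed.
Lemma mm_d_sym x y : d x y = d y x. Proof. by case: (mm_metric Y). Qed.
Lemma mm_d_triangle x y z : d x z <= d x y + d y z. Proof. by case: (mm_metric Y). Qed.

Definition dense_seq : nat -> T := projT1 (cid (mm_separable Y)).

Lemma dense_seqP x e : 0 < e -> exists k, d x (dense_seq k) < e.
Proof. exact: (projT2 (cid (mm_separable Y))). Qed.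

Lemma lip1_preimage_borel (h : T -> R) B :
  lip1 d h -> d_borel (@dist_R R) B -> d_borel d (h @^-1` B).
Proof. by move=> hh; apply: (d_borel_preimage ltr01) => x y; rewrite mul1r; exact: hh. Qed.

Lemma mm_ball_borel c r : d_borel d [set t | d t c < r].
Proof.
apply: d_borel_open => t /= htc; exists (r - d t c); first by rewrite subr_gt0.
by move=> y /= hy; have := mm_d_triangle y t c; rewrite (mm_d_sym y t); lra.
Qed.

Definition cell (r : R) (j : nat) : set T :=
  [set t | d t (dense_seq j) < r] `\` \bigcup_(l < j) [set t | d t (dense_seq l) < r].

Lemma cell_borel r j : d_borel d (cell r j).
Proof.
apply: d_borelD; first exact: mm_ball_borel.
rewrite bigcup_mkord; apply: (@d_borel_bigsetU _ _ d j (fun l => [set t | d t (dense_seq l) < r])).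
by move=> l _; exact: mm_ball_borel.
Qed.

Lemma cell_center r j t : cell r j t -> d t (dense_seq j) < r.
Proof. by case. Qed.

Lemma cell_cover r t : 0 < r -> exists j, cell r j t.
Proof.
move=> r0; have [j0 hj0] := dense_seqP t r0.
case: (ex_minnP (ex_intro (fun j => d t (dense_seq j) < r) j0 hj0)) => j hj hmin.
by exists j; split => //= -[l /= lj /hmin]; rewrite leqNgt lj.
Qed.

Lemma cell_uniq r j j' t : cell r j t -> cell r j' t -> j = j'.
Proof.
move=> [hj nj] [hj' nj']; case: (ltngtP j j') => // jj'.
- by case: nj'; exists j.
- by case: nj; exists j'.
Qed.

End MMSpace.

Section Median.
Variables (R : realType) (Y : mmspace R).
Local Notation T := (mm_T Y).
Local Notation d := (@mm_d R Y).
Local Notation m := (@mm_m R Y).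

Lemma OD_le_concentration (k b e : R) (h : T -> R) : lip1 d h -> (OD d m k <= b%:E)%E -> 0 < e ->
  exists B, [/\ d_borel (@dist_R R) B, ((1 - k)%:E <= m (h @^-1` B))%E &
    forall u v, B u -> B v -> `|u - v| < b + e].
Proof.
move=> hh hOD e0.
have : (PD (@dist_R R) (fun B => m (h @^-1` B)) (1 - k) < (b + e)%:E)%E.
  apply: le_lt_trans (_ : (b%:E < (b + e)%:E)%E); last by rewrite lte_fin ltrDl.
  by apply: le_trans hOD; apply: ereal_sup_ubound; exists h.
move=> /ereal_inf_lt[_ [A [hA hmA] <-] hlt]; exists A; split => // u v Au Av.
have : ((@dist_R R u v)%:E <= diam (@dist_R R) A)%E.
  by apply: ereal_sup_ubound; left; exists u => //; exists v.
by move=> /le_lt_trans /(_ hlt); rewrite lte_fin.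
Qed.

Definition median_lower (h : T -> R) := [set v : R | (m [set t | (h t < v)%R] <= (2^-1)%:E)%E].
Definition median (h : T -> R) := sup (median_lower h).

Section Concentrated.
Variables (k D : R) (h : T -> R) (B : set R) (u : R).
Hypotheses (hk : k < 2^-1) (hh : lip1 d h) (hB : d_borel (@dist_R R) B).
Hypothesis hmB : ((1 - k)%:E <= m (h @^-1` B))%E.
Hypotheses (hD : forall u v, B u -> B v -> `|u - v| <= D) (Bu : B u).

Let hB' := lip1_preimage_borel hh hB.
Let hlt v := lip1_preimage_borel hh (dist_R_borel_lt v).

Lemma median_lower_mem : median_lower h (u - D).
Proof.
rewrite /median_lower /=; apply: (@le_trans _ _ k%:E); last by rewrite lee_fin ltW.
apply: (bprob_disjoint_le (mm_prob Y) hB' (hlt _) _ hmB).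
apply/seteqP; split => t //= [Bt ht].
by have := hD Bt Bu; have := ler_norm (u - h t); rewrite distrC; lra.
Qed.

Lemma median_lower_ub v : median_lower h v -> v <= u + D.
Proof.
move=> hv; rewrite leNgt; apply/negP => uv.
have : (m (h @^-1` B) <= m [set t | (h t < v)%R])%E.
  apply: (bprob_le (mm_prob Y) hB' (hlt v)) => t /= Bt.
  by have := hD Bt Bu; have := ler_norm (h t - u); lra.
by move=> /(le_trans hmB)/le_trans/(_ hv); rewrite lee_fin; have := hk; lra.
Qed.

Lemma median_near : `|u - median h| <= D.
Proof.
have ne : median_lower h !=set0 by exists (u - D); exact: median_lower_mem.
have ub : ubound (median_lower h) (u + D) by move=> v /median_lower_ub.
have lo := sup_upper_bound (conj ne (ex_intro _ _ ub)) median_lower_mem.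
have hi : median h <= u + D := ge_sup ne ub.
by rewrite ler_norml; apply/andP; split; rewrite /median in hi *; lra.
Qed.

End Concentrated.

Lemma median_lower_has_sup (k b : R) (h : T -> R) : k < 2^-1 -> lip1 d h ->
  (OD d m k <= b%:E)%E -> has_sup (median_lower h).
Proof.
move=> hk hh hOD; have [B [hB hmB hBd]] := OD_le_concentration hh hOD ltr01.
have hD u v : B u -> B v -> `|u - v| <= b + 1 by move=> Bu Bv; exact/ltW/hBd.
have [u Bu] : exists u, B u.
  apply: contrapT => nB; move: hmB.
  rewrite (_ : h @^-1` B = set0); last by apply/seteqP; split => // t Bt; apply: nB; exists (h t).
  by rewrite (bprob0 (mm_prob Y)) lee_fin; lra.
split; first by exists (u - (b + 1)); exact: median_lower_mem hk hh hB hmB hD Bu.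
by exists (u + (b + 1)) => v /(median_lower_ub hk hh hB hmB hD Bu).
Qed.

Lemma median_le_shift (h h' : T -> R) (delta : R) : lip1 d h -> lip1 d h' ->
  (forall t, h t <= h' t + delta) -> median_lower h !=set0 -> has_sup (median_lower h') ->
  median h <= median h' + delta.
Proof.
move=> hh hh' hd [v0 Sv0] hs'.
have shift v : median_lower h v -> median_lower h' (v - delta).
  move=> hv; apply: le_trans hv; apply: (bprob_le (mm_prob Y)).
  - exact: lip1_preimage_borel hh' (dist_R_borel_lt _).
  - exact: lip1_preimage_borel hh (dist_R_borel_lt _).
  - by move=> t /=; have := hd t; lra.
apply: ge_sup; first by exists v0.
by move=> v /shift /(sup_upper_bound hs'); rewrite /median; lra.
Qed.

Lemma median_far (k b e : R) (h : T -> R) : k < 2^-1 -> lip1 d h -> (OD d m k <= b%:E)%E ->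
  0 < e -> (m [set t | (b + e < `|h t - median h|)%R] <= k%:E)%E.
Proof.
move=> hk hh hOD e0; have [B [hB hmB hBd]] := OD_le_concentration hh hOD e0.
have hD u v : B u -> B v -> `|u - v| <= b + e by move=> Bu Bv; exact/ltW/hBd.
apply: (bprob_disjoint_le (mm_prob Y) (lip1_preimage_borel hh hB) _ _ hmB).
  exact: lip1_preimage_borel hh (dist_R_borel_far _ _).
apply/seteqP; split => t //= [Bt ht].
by have := median_near hk hh hB hmB hD Bt; lra.
Qed.

End Median.

Lemma dfwith_dfwith (I : eqType) (T_ : I -> Type) (f : forall i, T_ i) i (x y : T_ i) :
  dfwith (dfwith f i x) i y = dfwith f i y.
Proof.
apply: functional_extensionality_dep => j.
by case: (eqVneq i j) => [<-|ij]; rewrite ?dfwithin ?dfwithout.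
Qed.

Section Coordinatewise.
Variables (R : realType) (n : nat) (X : 'I_n.+1 -> mmspace R).
Local Notation Pi := (forall i, mm_T (X i)).

Definition coord_lip1 (g : Pi -> R) := forall i (x y : Pi),
  (forall j, j != i -> x j = y j) -> `|g x - g y| <= mm_d (x i) (y i).

(* Move from y to x one coordinate at a time. *)
Lemma coord_lip1_sum g (x y : Pi) : coord_lip1 g ->
  `|g x - g y| <= \sum_(i < n.+1) mm_d (x i) (y i).
Proof.
move=> hg; pose w (l : nat) : Pi := fun j => if (j < l)%N then x j else y j.
have wx : w n.+1 = x by apply: functional_extensionality_dep => j; rewrite /w ltn_ord.
have wy : w 0%N = y by apply: functional_extensionality_dep => j; rewrite /w.
rewrite -{1}wx -{1}wy -(@telescope_sumr _ 0 n.+1 (fun l => g (w l))) // big_mkord.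
apply: le_trans (ler_norm_sum _ _ _) _; apply: ler_sum => i _.
have := hg i (w i.+1) (w i); rewrite /w ltnSn ltnn; apply => j ji.
by rewrite ltnS leq_eqVlt -[j == i :> nat]/(j == i) (negbTE ji).
Qed.

Lemma coord_lip1_close g (x y : Pi) r : coord_lip1 g ->
  (forall i, mm_d (x i) (y i) <= r) -> `|g x - g y| <= n.+1%:R * r.
Proof.
move=> hg hr; apply: le_trans (coord_lip1_sum x y hg) _.
have -> : n.+1%:R * r = \sum_(i < n.+1) r by rewrite sumr_const card_ord mulr_natl.
by apply: ler_sum => i _.
Qed.

Definition rect (A : forall i, set (mm_T (X i))) : set Pi := [set x | forall i, A i (x i)].

Lemma rect_dfwithP A k (B : set (mm_T (X k))) x :
  rect (dfwith A k B) x <-> B (x k) /\ forall i, i != k -> A i (x i).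
Proof.
split=> [h|[Bx Ax] i].
  by split=> [|i ik]; [have := h k; rewrite dfwithin | have := h i; rewrite dfwithout 1?eq_sym].
by case: (eqVneq k i) => [<-|ki]; rewrite ?dfwithin ?dfwithout //; apply: Ax; rewrite eq_sym.
Qed.

Definition slice (g : Pi -> R) (x : Pi) (k : 'I_n.+1) : mm_T (X k) -> R :=
  fun t => g (dfwith x k t).
#[global] Arguments slice g x k : clear implicits.

Lemma coord_lip1_slice g : coord_lip1 g -> forall x k, lip1 (@mm_d R (X k)) (slice g x k).
Proof.
move=> hg x k t t'; have := hg k (dfwith x k t) (dfwith x k t'); rewrite !dfwithin; apply => j jk.
by rewrite !dfwithout // eq_sym.
Qed.

End Coordinatewise.

Section Product.
Variables (R : realType) (n : nat) (X : 'I_n.+1 -> mmspace R) (p : \bar R).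
Hypothesis hp : (1 <= p)%E.
Local Notation Pi := (forall i, mm_T (X i)).
Local Notation dp := (dprod (fun i => @mm_d R (X i)) p).

Lemma dprod_ge (x y : Pi) i : mm_d (x i) (y i) <= dp x y.
Proof.
rewrite /dprod; case: p hp => [r| |] // hr; last exact: (le_bigmax _ (fun j => mm_d (x j) (y j))).
have r0 : r != 0 by apply/eqP => r0; move: hr; rewrite r0 lee_fin ler10.
rewrite -{1}(@powRr1 _ (mm_d (x i) (y i))) ?mm_d_ge0 // -(mulfV r0) powRrM.
apply: ge0_ler_powR; rewrite ?nnegrE ?invr_ge0 ?powR_ge0 ?sumr_ge0 //.
- by move: hr; rewrite lee_fin; lra.
- by move=> j _; exact: powR_ge0.
- by rewrite (bigD1 i) //= lerDl sumr_ge0 // => j _; exact: powR_ge0.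
Qed.

Lemma dprod_single (x y : Pi) i : (forall j, j != i -> x j = y j) ->
  dp x y <= mm_d (x i) (y i).
Proof.
move=> xy; rewrite /dprod; case: p hp => [r| |] // hr.
  have r0 : r != 0 by apply/eqP => r0; move: hr; rewrite r0 lee_fin ler10.
  rewrite (bigD1 i) //= big1 ?addr0 => [|j /xy ->]; last by rewrite mm_d_xx powR0.
  by rewrite -powRrM mulfV // powRr1 // mm_d_ge0.
apply: bigmax_le => [|j _]; first exact: mm_d_ge0.
by case: (eqVneq j i) => [->//|/xy ->]; rewrite mm_d_xx mm_d_ge0.
Qed.

Lemma lip1_coord_lip1 f : lip1 dp f -> coord_lip1 f.
Proof. by move=> hf i x y xy; apply: le_trans (hf x y) _; exact: dprod_single. Qed.

Lemma coord_lip1_dprod g (x y : Pi) : coord_lip1 g -> `|g x - g y| <= n.+1%:R * dp x y.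
Proof. by move=> hg; apply: coord_lip1_close => // i; exact: dprod_ge. Qed.

Lemma coord_lip1_preimage_borel g B :
  coord_lip1 g -> d_borel (@dist_R R) B -> d_borel dp (g @^-1` B).
Proof. by move=> hg; apply: (d_borel_preimage (ltr0Sn _ n)) => x y; exact: coord_lip1_dprod. Qed.

Lemma coord_lip1_dev_borel g g' c : coord_lip1 g -> coord_lip1 g' ->
  d_borel dp [set x | (c < `|g x - g' x|)%R].
Proof.
move=> hg hg'; have -> : [set x | (c < `|g x - g' x|)%R] =
    (fun x => g x - g' x) @^-1` [set s | c < `|s - 0|].
  by apply/seteqP; split => x /=; rewrite subr0.
apply: (d_borel_preimage (e := @dist_R R) (C := 2 * n.+1%:R)); first by rewrite mulr_gt0.
  move=> x y; rewrite /dist_R.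
  rewrite (_ : g x - g' x - (g y - g' y) = (g x - g y) - (g' x - g' y)); last by ring.
  apply: le_trans (ler_normB _ _) _.
  by have := coord_lip1_dprod x y hg; have := coord_lip1_dprod x y hg'; lra.
exact: dist_R_borel_far.
Qed.

Lemma rect_borel A : (forall i, d_borel (@mm_d R (X i)) (A i)) -> d_borel dp (rect A).
Proof.
move=> hA; have -> : rect A = [set x | forall i, i \in index_enum 'I_n.+1 -> A i (x i)].
  by apply/seteqP; split => x /= h i => [_|]; apply: h; rewrite ?mem_index_enum.
apply: (@d_borel_bigcap_seq _ _ dp _ _ (fun i (x : Pi) => A i (x i))) => i.
apply: (d_borel_preimage (h := fun x : Pi => x i) ltr01) => [x y|]; last exact: hA.
by rewrite mul1r; exact: dprod_ge.
Qed.

End Product.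

Section MedianAlong.
Variables (R : realType) (n : nat) (X : 'I_n.+1 -> mmspace R).
Local Notation Pi := (forall i, mm_T (X i)).

Definition med_along (k : 'I_n.+1) (g : Pi -> R) (x : Pi) : R := median (slice g x k).

Lemma med_along_dfwith k g x t : med_along k g (dfwith x k t) = med_along k g x.
Proof. by rewrite /med_along /slice; congr median; apply: funext => s; rewrite dfwith_dfwith. Qed.

Definition depends_only (Q : pred 'I_n.+1) (g : Pi -> R) :=
  forall x y : Pi, (forall j, Q j -> x j = y j) -> g x = g y.

Lemma depends_only_sub (Q Q' : pred 'I_n.+1) g :
  {subset Q <= Q'} -> depends_only Q g -> depends_only Q' g.
Proof. by move=> QQ' hg x y xy; apply: hg => j /QQ'; exact: xy. Qed.

Lemma med_along_depends_only Q k g :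
  depends_only Q g -> depends_only [pred j | Q j && (j != k)] (med_along k g).
Proof.
move=> hg x y xy; rewrite /med_along /slice; congr median; apply: funext => t.
apply: hg => j Qj; case: (eqVneq k j) => [<-|kj]; first by rewrite !dfwithin.
by rewrite !dfwithout // xy //= Qj eq_sym.
Qed.

Variables (k : 'I_n.+1) (kap b : R).
Hypotheses (hk : kap < 2^-1) (hb : (mmOD (X k) kap <= b%:E)%E).

Lemma med_along_coord_lip1 g : coord_lip1 g -> coord_lip1 (med_along k g).
Proof.
move=> hg i x y xy; case: (eqVneq i k) => [ik|ik].
  have -> : med_along k g x = med_along k g y.
    apply: (med_along_depends_only (Q := predT)) => [u v uv|j /= jk].
      by congr g; apply: functional_extensionality_dep => j; exact: uv.
    by apply: xy; rewrite ik.
  by rewrite subrr normr0 mm_d_ge0.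
have lx := coord_lip1_slice hg x (k := k); have ly := coord_lip1_slice hg y (k := k).
have dxy t : `|slice g x k t - slice g y k t| <= mm_d (x i) (y i).
  have := hg i (dfwith x k t) (dfwith y k t); rewrite !dfwithout 1?eq_sym //; apply => j ji.
  by case: (eqVneq k j) => [<-|kj]; rewrite ?dfwithin ?dfwithout ?xy.
have hs_x := median_lower_has_sup hk lx hb; have hs_y := median_lower_has_sup hk ly hb.
have h1 : med_along k g x <= med_along k g y + mm_d (x i) (y i).
  by apply: median_le_shift lx ly _ hs_x.1 hs_y => t; have := dxy t; rewrite ler_norml; lra.
have h2 : med_along k g y <= med_along k g x + mm_d (x i) (y i).
  by apply: median_le_shift ly lx _ hs_y.1 hs_x => t; have := dxy t; rewrite ler_norml; lra.
by rewrite ler_norml; apply/andP; split; lra.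
Qed.

End MedianAlong.

Section ProductMeasure.
Variables (R : realType) (n : nat) (X : 'I_n.+1 -> mmspace R) (p : \bar R)
  (mu : set (forall i, mm_T (X i)) -> \bar R).
Hypotheses (hp : (1 <= p)%E) (hmu : @is_product_measure R n.+1 X p mu).
Local Notation Pi := (forall i, mm_T (X i)).
Local Notation dp := (dprod (fun i => @mm_d R (X i)) p).

Lemma product_rect_dfwith_le (A : forall i, set (mm_T (X i))) k (B B' : set (mm_T (X k))) c :
  (forall i, d_borel (@mm_d R (X i)) (A i)) -> d_borel (@mm_d R (X k)) B ->
  d_borel (@mm_d R (X k)) B' -> (@mm_m R (X k) B <= c%:E * @mm_m R (X k) B')%E ->
  (mu (rect (dfwith A k B)) <= c%:E * mu (rect (dfwith A k B')))%E.
Proof.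
move=> hA hB hB' BB'.
have hAB (C : set (mm_T (X k))) i : d_borel (@mm_d R (X k)) C ->
    d_borel (@mm_d R (X i)) (dfwith A k C i).
  by move=> hC; case: (eqVneq k i) => [<-|ki]; rewrite ?dfwithin ?dfwithout.
rewrite (hmu.2 _ (fun i => hAB _ i hB)) (hmu.2 _ (fun i => hAB _ i hB')).
rewrite (bigD1 k) //= [X in (_ <= _ * X)%E](bigD1 k) //= !dfwithin muleA.
under eq_bigr => i ik do rewrite dfwithout 1?eq_sym //.
under [X in (_ <= _ * X)%E]eq_bigr => i ik do rewrite dfwithout 1?eq_sym //.
apply: lee_wpmul2r => //; apply: prode_ge0 => i _; exact: (bprob_ge0 (mm_prob (X i)) (hA i)).
Qed.

Lemma product_marginal k (C : set (mm_T (X k))) :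
  d_borel (@mm_d R (X k)) C -> mu [set x | C (x k)] = @mm_m R (X k) C.
Proof.
move=> hC; have -> : [set x | C (x k)] = rect (dfwith (fun i => setT) k C).
  by apply/seteqP; split => x; rewrite rect_dfwithP => //= -[].
rewrite hmu.2 => [|i]; last first.
  by case: (eqVneq k i) => [<-|ki]; rewrite ?dfwithin ?dfwithout //; exact: d_borelT.
rewrite (bigD1 k) //= dfwithin big1 ?mule1 // => i ki.
by rewrite dfwithout 1?eq_sym //; exact: bprobT (mm_prob _).
Qed.

Section MedAlongDeviation.
Variables (k : 'I_n.+1) (kap b : R).
Hypotheses (hk0 : 0 <= kap) (hk : kap < 2^-1) (hb : (mmOD (X k) kap <= b%:E)%E).
Variables (g : Pi -> R) (e : R).
Hypotheses (hg : coord_lip1 g) (e0 : 0 < e).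

Local Notation index := {ffun 'I_n.+1 -> nat}.
Let r := e / (4 * n.+1%:R).
Let center (J : index) : Pi := fun i => dense_seq (X i) (J i).
Let cells (J : index) : forall i, set (mm_T (X i)) := fun i => cell r (J i).
(* Requiring J k = 0 makes the boxes of distinct indices disjoint. *)
Let base (J : index) : set (mm_T (X k)) := [set _ | J k = 0%N].
Let bad (J : index) : set (mm_T (X k)) := slice g (center J) k @^-1`
  [set s | b + e / 2 < `|s - med_along k g (center J)|].
Let box J := rect (dfwith (cells J) k (base J)).
Let bad_box J := rect (dfwith (cells J) k (base J `&` bad J)).

Let r0 : 0 < r.
Proof. by rewrite divr_gt0 // mulr_gt0. Qed.

Let base_borel J : d_borel (@mm_d R (X k)) (base J).
Proof. exact: d_borel_cst. Qed.

Let bad_borel J : d_borel (@mm_d R (X k)) (bad J).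
Proof.
exact: lip1_preimage_borel (coord_lip1_slice hg (center J) (k := k)) (dist_R_borel_far _ _).
Qed.

Let box_cover x : exists J, box J x.
Proof.
have [jx hjx] := choice (fun i => cell_cover (x i) r0).
exists [ffun i => if i == k then 0%N else jx i]; apply/rect_dfwithP.
by split=> [|i ik]; rewrite /base /cells /= ffunE ?eqxx ?(negbTE ik).
Qed.

Let box_disjoint J J' x : box J x -> box J' x -> J = J'.
Proof.
move=> /rect_dfwithP[Jk hJ] /rect_dfwithP[J'k hJ']; apply/ffunP => i.
by case: (eqVneq i k) => [->|ik]; [rewrite Jk J'k | exact: cell_uniq (hJ _ ik) (hJ' _ ik)].
Qed.

Let dev_bad_box J x : b + e < `|g x - med_along k g x| -> box J x -> bad_box J x.
Proof.
move=> hx /rect_dfwithP[Jk hJ]; apply/rect_dfwithP; split=> //; split=> //.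
set y := dfwith (center J) k (x k).
have xy i : mm_d (x i) (y i) <= r.
  case: (eqVneq k i) => [<-|ki]; first by rewrite /y dfwithin mm_d_xx ltW.
  by rewrite /y dfwithout //; apply/ltW/cell_center/hJ; rewrite eq_sym.
have nr : n.+1%:R * r = e / 4.
  by rewrite /r; field; rewrite addrC natr1 pnatr_eq0.
have gxy := coord_lip1_close hg xy.
have mxy := coord_lip1_close (med_along_coord_lip1 hk hb hg) xy.
rewrite /y med_along_dfwith nr in mxy; rewrite nr in gxy.
have := ler_distD (g y) (g x) (med_along k g x).
have := ler_distD (med_along k g (center J)) (g y) (med_along k g x).
rewrite /bad /slice /= -/y (distrC (med_along k g _)) => h1 h2.
by have := hx; have := mxy; have := gxy; lra.
Qed.

Let cells_with_borel J (C : set (mm_T (X k))) : d_borel (@mm_d R (X k)) C ->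
  forall i, d_borel (@mm_d R (X i)) (dfwith (cells J) k C i).
Proof.
move=> hC i; case: (eqVneq k i) => [<-|ki]; first by rewrite dfwithin.
by rewrite dfwithout //; exact: cell_borel.
Qed.

Let bad_box_le J : (mu (bad_box J) <= kap%:E * mu (box J))%E.
Proof.
apply: product_rect_dfwith_le => [i|||]; first exact: cell_borel.
- exact: d_borelI (base_borel J) (bad_borel J).
- exact: base_borel J.
case: (eqVneq (J k) 0%N) => Jk.
  rewrite (_ : base J = setT) ?setTI; last by apply/seteqP; split.
  rewrite (bprobT (mm_prob _)) mule1; apply: median_far hk _ hb _; rewrite ?divr_gt0 //.
  exact: coord_lip1_slice.
rewrite (_ : base J = set0); last by apply/seteqP; split => // t /eqP; rewrite (negbTE Jk).
by rewrite set0I (bprob0 (mm_prob _)) mule0.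
Qed.

Lemma med_along_dev_le : (mu [set x | (b + e < `|g x - med_along k g x|)%R] <= kap%:E)%E.
Proof.
apply: (bprob_le_cover hmu.1 hk0 _ _ _ box_disjoint _ bad_box_le).
- exact: (coord_lip1_dev_borel hp _ hg (med_along_coord_lip1 hk hb hg)).
- move=> J; apply: (rect_borel hp); apply: cells_with_borel.
  exact: d_borelI (base_borel J) (bad_borel J).
- by move=> J; apply: (rect_borel hp); apply: cells_with_borel; exact: base_borel.
- by move=> x hx; have [J hJ] := box_cover x; exists J => //; exact: dev_bad_box.
Qed.

End MedAlongDeviation.

End ProductMeasure.

Lemma PD_le (R : realType) (m : set R -> \bar R) (alpha D : R) B :
  d_borel (@dist_R R) B -> (alpha%:E <= m B)%E -> 0 <= D ->
  (forall u v, B u -> B v -> `|u - v| <= D) -> (PD (@dist_R R) m alpha <= D%:E)%E.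
Proof.
move=> hB hmB D0 hD; apply: le_trans (ereal_inf_lbound _) _; first by exists B.
apply: ge_ereal_sup => _ [[u Bu [v Bv <-]]|->]; rewrite lee_fin //.
exact: hD.
Qed.

Lemma mmOD_ge0 (R : realType) (Y : mmspace R) k : (0 <= mmOD Y k)%E.
Proof.
have c0 : lip1 (@mm_d R Y) (fun _ => 0) by move=> x y; rewrite subrr normr0 mm_d_ge0.
apply: (@le_trans _ _ (PD (@dist_R R) (fun B => mm_m ((fun _ : mm_T Y => 0) @^-1` B)) (1 - k))).
  by apply: le_ereal_inf_tmp => _ [A _ <-]; apply: ereal_sup_ubound; right.
by apply: ereal_sup_ubound; exists (fun _ => 0).
Qed.

Lemma inordS_neq0 n j : (j < n)%N -> (inord j.+1 : 'I_n.+1) != ord0.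
Proof. by move=> jn; apply/eqP => /(congr1 val) /=; rewrite inordK. Qed.

Lemma sum_neq_ord0 (V : nmodType) n (F : 'I_n.+1 -> V) :
  \sum_(i < n.+1 | i != ord0) F i = \sum_(j < n) F (inord j.+1).
Proof.
rewrite big_mkcond big_ord_recl eqxx /= add0r; apply: eq_bigr => j _.
by congr F; apply: val_inj; rewrite /= inordK // ltnS.
Qed.

Section Iteration.
Variables (R : realType) (n : nat) (X : 'I_n.+1 -> mmspace R) (p : \bar R)
  (mu : set (forall i, mm_T (X i)) -> \bar R) (kap b : 'I_n.+1 -> R).
Hypotheses (hp : (1 <= p)%E) (hmu : @is_product_measure R n.+1 X p mu).
Hypothesis hk : forall i : 'I_n.+1, i != ord0 -> 0 < kap i < 2^-1.
Hypothesis hb : forall i, (mmOD (X i) (kap i) <= (b i)%:E)%E.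
Local Notation Pi := (forall i, mm_T (X i)).
Local Notation dp := (dprod (fun i => @mm_d R (X i)) p).
Variables (f : Pi -> R).
Hypothesis hf : lip1 dp f.

Fixpoint med_iter (j : nat) : Pi -> R :=
  if j is j'.+1 then med_along (inord j) (med_iter j') else f.

Lemma med_iter_coord_lip1 j : (j <= n)%N -> coord_lip1 (med_iter j).
Proof.
elim: j => [_|j ih jn]; first exact: (lip1_coord_lip1 hp hf : coord_lip1 f).
have /andP[_ hk2] := hk (inordS_neq0 jn).
exact: (med_along_coord_lip1 hk2 (hb _) (ih (ltnW jn)) : coord_lip1 _).
Qed.

Lemma med_iter_depends_only j : (j <= n)%N ->
  depends_only [pred i : 'I_n.+1 | (i == ord0) || (j < i)%N] (med_iter j).
Proof.
elim: j => [_ x y xy|j ih jn].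
  by congr f; apply: functional_extensionality_dep => -[[|i] ?]; apply: xy; rewrite ?orbT.
have sub : {subset [pred i | ((i == ord0) || (j < i)%N) && (i != inord j.+1)] <=
    [pred i : 'I_n.+1 | (i == ord0) || (j.+1 < i)%N]}.
  move=> i; rewrite !inE => /andP[/orP[->//|ji] ij]; apply/orP; right; rewrite ltn_neqAle ji andbT.
  by apply: contraNneq ij => /= e; apply/eqP/val_inj; rewrite /= inordK // -e.
have := med_along_depends_only (k := inord j.+1) (ih (ltnW jn)).
exact: (depends_only_sub sub).
Qed.

Lemma med_iter_dev_le j e : (j < n)%N -> 0 < e ->
  (mu [set x | (b (inord j.+1) + e < `|med_iter j x - med_iter j.+1 x|)%R]
    <= (kap (inord j.+1))%:E)%E.
Proof.
move=> jn e0; have /andP[hk1 hk2] := hk (inordS_neq0 jn).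
exact: (med_along_dev_le hp hmu (ltW hk1) hk2 (hb _) (med_iter_coord_lip1 (ltnW jn)) e0).
Qed.

Let x0 : Pi := fun i => dense_seq (X i) 0.
Let h0 := slice (med_iter n) x0 ord0.

Let b_ge0 i : 0 <= b i.
Proof. by rewrite -lee_fin; apply: le_trans (hb i); exact: mmOD_ge0. Qed.

Let lip1_h0 : lip1 (@mm_d R (X ord0)) h0.
Proof. exact: (coord_lip1_slice (med_iter_coord_lip1 (leqnn n)) x0 (k := ord0)). Qed.

Lemma med_iter_n_slice x : med_iter n x = h0 (x ord0).
Proof.
apply: med_iter_depends_only => // i /orP[/eqP->|]; first by rewrite dfwithin.
by rewrite ltnNge -ltnS ltn_ord.
Qed.

Section Concentration.
Variables (e : R) (B : set R).
Hypotheses (e0 : 0 < e) (hB : d_borel (@dist_R R) B).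
Hypothesis hmB : ((1 - kap ord0)%:E <= @mm_m R (X ord0) (h0 @^-1` B))%E.
Hypothesis hBd : forall u v, B u -> B v -> `|u - v| < b ord0 + e.

Let far (j : nat) := [set x | (b (inord j.+1) + e < `|med_iter j x - med_iter j.+1 x|)%R].
Let bad := [set x | ~ B (med_iter n x)] `|` \big[setU/set0]_(j < n) far j.

Let far_borel j : (j < n)%N -> d_borel dp (far j).
Proof.
move=> jn.
exact: (coord_lip1_dev_borel hp _ (med_iter_coord_lip1 (ltnW jn)) (med_iter_coord_lip1 jn)).
Qed.

Let off_B_borel : d_borel dp [set x | ~ B (med_iter n x)].
Proof.
exact: (coord_lip1_preimage_borel hp (med_iter_coord_lip1 (leqnn n)) (d_borelC hB)).
Qed.

Let bad_borel : d_borel dp bad.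
Proof. by apply: d_borelU => //; exact: d_borel_bigsetU. Qed.

Let off_B_le : (mu [set x | ~ B (med_iter n x)] <= (kap ord0)%:E)%E.
Proof.
have hB0 := lip1_preimage_borel lip1_h0 hB.
rewrite (_ : [set x | ~ B (med_iter n x)] = [set x : Pi | (~` (h0 @^-1` B)) (x ord0)]); last first.
  by apply/seteqP; split => x /=; rewrite med_iter_n_slice.
rewrite (product_marginal hmu) //; last exact: d_borelC.
exact: (bprob_disjoint_le (mm_prob _) hB0 (d_borelC hB0) (setICr _) hmB).
Qed.

Let bad_le : (mu bad <= (\sum_(i < n.+1) kap i)%:E)%E.
Proof.
apply: le_trans (bprob_setU_le hmu.1 off_B_borel _) _; first exact: d_borel_bigsetU.
rewrite (bigD1 ord0) //= sum_neq_ord0 EFinD -sumEFin; apply: leeD; first exact: off_B_le.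
apply: le_trans (bprob_bigsetU_le hmu.1 far_borel) _.
by apply: lee_sum => j _; exact: med_iter_dev_le.
Qed.

Let C := \sum_(j < n) (b (inord j.+1) + e).

Let near_B_off_bad x : ~ bad x -> exists2 u, B u & `|f x - u| <= C.
Proof.
move=> nbad; exists (med_iter n x).
  by apply: contrapT => nB; apply: nbad; left.
have tel : f x - med_iter n x = \sum_(j < n) (med_iter j x - med_iter j.+1 x).
  rewrite -opprB -[f x]/(med_iter 0 x) -(telescope_sumr (fun j => med_iter j x)) //.
  by rewrite -sumrN big_mkord; apply: eq_bigr => j _; rewrite opprB.
rewrite tel; apply: le_trans (ler_norm_sum _ _ _) _; apply: ler_sum => j _.
rewrite leNgt; apply/negP => farj; apply: nbad; right.
by rewrite -bigcup_mkord; exists j => //=.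
Qed.

Lemma PD_prod_le_of_concentration :
  (PD (@dist_R R) (fun A => mu (f @^-1` A)) (1 - \sum_(i < n.+1) kap i) <=
   (b ord0 + 2 * \sum_(i < n.+1 | i != ord0) b i + (2 * n%:R + 3) * e)%:E)%E.
Proof.
have hN := dist_R_borel_nbhs B (C + e).
have hfN := coord_lip1_preimage_borel hp (lip1_coord_lip1 hp hf) hN.
apply: (PD_le hN).
- have cover : f @^-1` [set s | exists2 u, B u & `|s - u| < C + e] `|` bad = setT.
    apply/seteqP; split => // x _; have [bx|nbx] := pselect (bad x); [by right | left].
    by have [u Bu fu] := near_B_off_bad nbx; exists u => //; have := e0; lra.
  have := bprob_setU_le hmu.1 hfN bad_borel; rewrite cover (bprobT hmu.1).
  have := bprob_ge0 hmu.1 hfN; have := bprob_le1 hmu.1 hfN; have := bad_le.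
  have := bprob_ge0 hmu.1 bad_borel.
  case: (mu bad) => [c| |] //; case: (mu (f @^-1` _)) => [a| |] //.
  by rewrite -EFinD !lee_fin; lra.
- by rewrite !addr_ge0 ?mulr_ge0 ?sumr_ge0 ?ler0n ?b_ge0 ?(ltW e0).
have hC : C = \sum_(i < n.+1 | i != ord0) b i + n%:R * e.
  by rewrite /C big_split sum_neq_ord0 /= sumr_const card_ord mulr_natl.
move=> s t [u Bu su] [v Bv tv]; have := hBd Bu Bv.
have := ler_distD u s t; have := ler_distD v u t; rewrite (distrC v t); have := hC.
by lra.
Qed.

End Concentration.

Lemma PD_prod_le e : 0 < e ->
  (PD (@dist_R R) (fun A => mu (f @^-1` A)) (1 - \sum_(i < n.+1) kap i) <=
   (b ord0 + 2 * \sum_(i < n.+1 | i != ord0) b i + (2 * n%:R + 3) * e)%:E)%E.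
Proof.
move=> e0; have [B [hB hmB hBd]] := OD_le_concentration lip1_h0 (hb ord0) e0.
exact: PD_prod_le_of_concentration hBd.
Qed.

End Iteration.

Lemma OD_prod_le (R : realType) (n : nat) (X : 'I_n.+1 -> mmspace R) (p : \bar R)
    (mu : set (forall i, mm_T (X i)) -> \bar R) (kap b : 'I_n.+1 -> R) :
  (1 <= p)%E -> @is_product_measure R n.+1 X p mu ->
  (forall i : 'I_n.+1, i != ord0 -> 0 < kap i < 2^-1) ->
  (forall i, (mmOD (X i) (kap i) <= (b i)%:E)%E) ->
  (OD (dprod (fun i => @mm_d R (X i)) p) mu (\sum_(i < n.+1) kap i) <=
    (b ord0 + 2 * \sum_(i < n.+1 | i != ord0) b i)%:E)%E.
Proof.
move=> hp hmu hk hb; apply: ge_ereal_sup => _ [f hf <-]; apply/lee_addgt0Pr => eps eps0.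
have N0 : 0 < 2 * n%:R + 3 :> R by rewrite ltr_wpDl // mulr_ge0 // ler0n.
have := PD_prod_le hp hmu hk hb hf (divr_gt0 eps0 N0).
by rewrite [_ * (eps / _)]mulrC divfK ?gt_eqF // EFinD.
Qed.

Lemma le_adde_mul2_sum (R : realType) n (a : 'I_n.+1 -> \bar R) i :
  (forall j, 0 <= a j)%E -> (a i <= a ord0 + 2%:E * \sum_(j < n.+1 | j != ord0) a j)%E.
Proof.
move=> a0; have S0 : (0 <= \sum_(j < n.+1 | j != ord0) a j)%E by exact: sume_ge0.
case: (eqVneq i ord0) => [->|i0]; first by rewrite leeDl // mule_ge0.
have aiS : (a i <= \sum_(j < n.+1 | j != ord0) a j)%E.
  by rewrite (bigD1 i) //= leeDl // sume_ge0.
apply: le_trans (leeDr _ (a0 _)); apply: le_trans aiS _.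
by rewrite -{1}(mul1e (\sum_(j < n.+1 | j != ord0) a j)) lee_wpmul2r // lee_fin ler1n.
Qed.

Unset Implicit Arguments. Set Strict Implicit. Set Printing Implicit Defensive.

Theorem mainTheorem10 (R : realType) (p : \bar R) (n : nat)
    (X : 'I_n.+1 -> mmspace R)
    (mu : set (forall i, mm_T (X i)) -> \bar R)
    (kappa : 'I_n.+1 -> R) :
  (1 <= p)%E ->
  @is_product_measure R n.+1 X p mu ->
  0 < kappa ord0 < 1 ->
  (forall i : 'I_n.+1, i != ord0 -> 0 < kappa i < 2^-1) ->
  (OD (dprod (fun i => @mm_d R (X i)) p) mu (\sum_(i < n.+1) kappa i)
    <= mmOD (X ord0) (kappa ord0)
       + 2%:E * \sum_(i < n.+1 | i != ord0) mmOD (X i) (kappa i))%E.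
Proof.
move=> hp hmu _ hk.
have a0 i : (0 <= mmOD (X i) (kappa i))%E by exact: mmOD_ge0.
have [afin|] := pselect (forall i, mmOD (X i) (kappa i) < +oo)%E; last first.
  move=> /existsNP[i /negP]; rewrite -leNgt leye_eq => /eqP ai.
  by apply: le_trans (leey _) _; rewrite -ai le_adde_mul2_sum.
pose b i := fine (mmOD (X i) (kappa i)).
have ab i : mmOD (X i) (kappa i) = (b i)%:E by rewrite fineK // ge0_fin_numE.
rewrite (eq_bigr _ (fun i _ => ab i)) ab sumEFin -EFinM -EFinD.
by apply: OD_prod_le hp hmu hk _ => i; rewrite ab.
Qed.
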